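(* Let $r\ge 2$ be an integer and let $G$ be a connected $r$-regular graph of order $n$. (i) If $G$ is not a Moore graph of degree $r$ and diameter $2$, then $$\gamma_{\times r}(G)\le \frac{r^2-1}{r^2}\,n .$$ (ii) If $G$ is a Moore graph of degree $r$ and diameter $2$ (so $n=r^2+1$), then $$\gamma_{\times r}(G)=\frac{r^2}{r^2+1}\,n=r^2 .$$
   Context: All graphs are finite and simple. For a vertex $v$, $N[v]=\{v\}\cup\{u\in V(G): uv\in E(G)\}$ is its closed neighborhood. For a positive integer $k$, a $k$-tuple dominating set of $G$ is a set $S\subseteq V(G)$ with $|N[v]\cap S|\ge k$ for every $v\in V(G)$; $\gamma_{\times k}(G)$ denotes the minimum cardinality of such a set. A Moore graph of degree $r$ and diameter $2$ is an $r$-regular graph of diameter $2$ with exactly $1+r+r(r-1)=r^2+1$ vertices. *)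

From mathcomp Require Import all_boot.
Set Implicit Arguments. Unset Strict Implicit. Unset Printing Implicit Defensive.

Definition simple_graph (T : finType) (e : rel T) : Prop :=
  symmetric e /\ irreflexive e.

Definition cnbhd (T : finType) (e : rel T) (v : T) : {set T} :=
  [set u | (u == v) || e v u].

Definition onbhd (T : finType) (e : rel T) (v : T) : {set T} :=
  [set u | e v u].

Definition regular (T : finType) (e : rel T) (r : nat) : Prop :=
  forall v : T, #|onbhd e v| = r.

Definition connected (T : finType) (e : rel T) : Prop :=
  forall u v : T, connect e u v.

Definition within2 (T : finType) (e : rel T) (u v : T) : bool :=
  (u == v) || e u v || [exists w, e u w && e w v].

Definition diameter2 (T : finType) (e : rel T) : Prop :=
  (forall u v : T, within2 e u v) /\ (exists u v : T, (u != v) && ~~ e u v).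

Definition moore2 (T : finType) (e : rel T) (r : nat) : Prop :=
  regular e r /\ diameter2 e /\ #|T| = r ^ 2 + 1.

Definition ktuple_dom (T : finType) (e : rel T) (k : nat) (S : {set T}) : bool :=
  [forall v, k <= #|cnbhd e v :&: S|].

(* gamma_{x k}(G): minimum size of a k-tuple dominating set
   (#|T| if none exists; irrelevant here since V(G) is one when k <= delta+1) *)
Definition gamma_k (T : finType) (e : rel T) (k : nat) : nat :=
  \big[minn/#|T|]_(S : {set T} | ktuple_dom e k S) #|S|.

From mathcomp Require Import all_boot all_order zify.
Import Order.TTheory.
Set Implicit Arguments. Unset Strict Implicit. Unset Printing Implicit Defensive.

(* Call D a packing when its vertices are pairwise at distance at least 3.
   Every closed neighbourhood has r + 1 vertices and meets a packing at most
   once, so the complement of a packing is an r-tuple dominating set.  Balls of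
   radius 2 have at most r^2 + 1 vertices; growing a packing greedily, each new
   vertex is chosen next to the region already covered, so its ball contributes
   at most r^2 - 1 new vertices.  Unless the graph has diameter at most 2, this
   yields a packing D with n <= |D| r^2, whence gamma <= n - |D| <= (r^2-1)n/r^2.
   In diameter at most 2 any two vertices share a closed neighbourhood, so an
   r-tuple dominating set misses at most one vertex and gamma = n - 1; here
   n <= r^2 + 1, with equality exactly for Moore graphs. *)

Lemma card_bigcup_le (T I : finType) (P : pred I) (F : I -> {set T}) :
  #|\bigcup_(i | P i) F i| <= \sum_(i | P i) #|F i|.
Proof.
elim/big_rec2: _ => [|i n U _ leUn]; first by rewrite cards0.
by rewrite (leq_trans (leq_card_setU (F i) U).1) ?leq_add2l.
Qed.

Section GammaK.
Variables (T : finType) (e : rel T) (k : nat).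

Lemma gamma_k_le S : ktuple_dom e k S -> gamma_k e k <= #|S|.
Proof. exact: (@bigmin_le_cond _ nat _ #|T| S _ (fun S => #|S|)). Qed.

Lemma gamma_k_ge m :
  m <= #|T| -> (forall S : {set T}, ktuple_dom e k S -> m <= #|S|) -> m <= gamma_k e k.
Proof.
move=> leT le_dom; rewrite /gamma_k.
by elim/big_ind: _ => // x y lex ley; rewrite leq_min lex ley.
Qed.

End GammaK.

Section RegularGraph.
Variables (T : finType) (e : rel T) (r : nat).
Hypotheses (e_sym : symmetric e) (e_irr : irreflexive e) (e_reg : regular e r).

Lemma card_cnbhd v : #|cnbhd e v| = r.+1.
Proof.
have -> : cnbhd e v = v |: onbhd e v by apply/setP=> x; rewrite !inE.
by rewrite cardsU1 e_reg inE e_irr.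
Qed.

Lemma within2xx v : within2 e v v.
Proof. by rewrite /within2 eqxx. Qed.

Lemma within2P u v :
  reflect (exists w, (u \in cnbhd e w) && (v \in cnbhd e w)) (within2 e u v).
Proof.
rewrite /within2; apply: (iffP idP) => [|[w]].
  case/orP=> [/orP[/eqP-> | euv] | /existsP[w /andP[euw ewv]]].
  - by exists v; rewrite !inE eqxx.
  - by exists u; rewrite !inE eqxx euv orbT.
  - by exists w; rewrite !inE (e_sym w) euw ewv !orbT.
rewrite !inE => /andP[/orP[/eqP-> | ewu] /orP[/eqP-> | ewv]].
- by rewrite eqxx.
- by rewrite ewv orbT.
- by rewrite e_sym ewu orbT.
- by apply/orP; right; apply/existsP; exists w; rewrite e_sym ewu ewv.
Qed.

Lemma within2C u v : within2 e u v = within2 e v u.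
Proof. by apply/within2P/within2P => -[w uvw]; exists w; rewrite andbC. Qed.

Definition ball2 v : {set T} := [set x | within2 e v x].

Lemma ball2_sub v : ball2 v \subset v |: \bigcup_(w in onbhd e v) (cnbhd e w :\ v).
Proof.
apply/subsetP=> x; rewrite inE => /within2P[w]; rewrite !inE => /andP[vw xw].
have [-> // | xv] := eqVneq x v.
apply/bigcupP.
case/orP: vw => [/eqP vw | ewv].
  subst w; rewrite (negPf xv) /= in xw.
  by exists x; [rewrite inE | rewrite !inE xv eqxx].
by exists w; [rewrite inE e_sym | rewrite !inE xv xw].
Qed.

Lemma card_ball2 v : #|ball2 v| <= r ^ 2 + 1.
Proof.
apply: leq_trans (subset_leq_card (ball2_sub v)) _.
rewrite cardsU1 addnC leq_add ?leq_b1 //.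
apply: leq_trans (card_bigcup_le _ _) _.
rewrite (eq_bigr (fun _ => r)) ?sum_nat_const ?e_reg ?mulnn // => w.
rewrite inE => evw; move: (cardsD1 v (cnbhd e w)).
by rewrite card_cnbhd !inE e_sym evw orbT => -[].
Qed.

Definition packing (D : {set T}) : Prop :=
  {in D &, forall d d', d != d' -> ~~ within2 e d d'}.

Lemma packing_set1 u : packing [set u].
Proof. by move=> a b /set1P-> /set1P->; rewrite eqxx. Qed.

Lemma packing_cnbhd_le1 (D : {set T}) v : packing D -> #|cnbhd e v :&: D| <= 1.
Proof.
move=> packD; rewrite leqNgt; apply/card_gt1P => -[d [d' [/setIP[dv dD] /setIP[d'v d'D] dd']]].
by have /negP[] := packD d d' dD d'D dd'; apply/within2P; exists v; rewrite dv d'v.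
Qed.

Lemma packing_ktuple_dom (D : {set T}) : packing D -> ktuple_dom e r (~: D).
Proof.
move=> packD; apply/forallP=> v.
have := cardsID D (cnbhd e v); rewrite card_cnbhd setDE.
have := packing_cnbhd_le1 v packD; lia.
Qed.

Lemma gamma_k_packing (D : {set T}) m :
  packing D -> #|T| <= #|D| * m -> gamma_k e r * m <= (m - 1) * #|T|.
Proof.
move=> packD leT; have := gamma_k_le (packing_ktuple_dom packD).
have := cardsC D; nia.
Qed.

Lemma card_setC_ktuple_dom_diam2 (S : {set T}) :
  (forall u v, within2 e u v) -> ktuple_dom e r S -> #|~: S| <= 1.
Proof.
move=> diam domS; rewrite leqNgt; apply/card_gt1P => -[d [d' [dS d'S dd']]].
have /within2P[v /andP[dv d'v]] := diam d d'.
have : 1 < #|cnbhd e v :\: S|.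
  by apply/card_gt1P; exists d, d'; rewrite !in_setD -!in_setC dS d'S dv d'v.
have := cardsID S (cnbhd e v); have := forallP domS v; rewrite card_cnbhd; lia.
Qed.

Lemma gamma_k_diam2 : (forall u v, within2 e u v) -> 0 < #|T| -> gamma_k e r = #|T|.-1.
Proof.
move=> diam /card_gt0P[u _]; apply/eqP; rewrite eqn_leq; apply/andP; split.
  by rewrite -(cardsC1 u); exact/gamma_k_le/packing_ktuple_dom/packing_set1.
apply: gamma_k_ge => [|S domS]; first exact: leq_pred.
have := card_setC_ktuple_dom_diam2 diam domS; have := cardsC S; lia.
Qed.

Definition covered (D : {set T}) : {set T} := \bigcup_(d in D) ball2 d.

Lemma mem_covered (D : {set T}) d : d \in D -> d \in covered D.
Proof. by move=> dD; apply/bigcupP; exists d; rewrite // inE within2xx. Qed.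

Lemma covered_set1 u : covered [set u] = ball2 u.
Proof. exact: big_set1. Qed.

Lemma covered_setU1 v (D : {set T}) : covered (v |: D) = ball2 v :|: covered D.
Proof. by rewrite /covered bigcup_setU big_set1. Qed.

Lemma packing_setU1 v (D : {set T}) : packing D -> v \notin covered D -> packing (v |: D).
Proof.
move=> packD vN a b; rewrite !inE => /orP[/eqP-> | aD] /orP[/eqP-> | bD]; rewrite ?eqxx //.
- by move=> _; apply: contra vN => vb; apply/bigcupP; exists b; rewrite // inE within2C.
- by move=> _; apply: contra vN => av; apply/bigcupP; exists a; rewrite ?inE.
- exact: packD.
Qed.

Lemma connected_edge_out (C : {set T}) x y :
  connected e -> x \in C -> y \notin C -> exists x' z, [/\ x' \in C, z \notin C & e x' z].
Proof.
move=> conn xC yN.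
have [/existsP[x' /existsP[z /and3P[x'C zN ex'z]]] | noEdge] :=
  boolP [exists x', exists z, [&& x' \in C, z \notin C & e x' z]]; first by exists x', z.
have closedC : closed e C.
  move=> a b eab; apply/idP/idP => [aC | bC]; apply/negPn/negP => notC.
  - by apply/(negP noEdge)/existsP; exists a; apply/existsP; exists b; rewrite aC notC.
  - by apply/(negP noEdge)/existsP; exists b; apply/existsP; exists a; rewrite bC notC e_sym.
by move: (closed_connect closedC (conn x y)); rewrite xC (negbTE yN).
Qed.

(* A covered vertex x next to an uncovered z is covered at distance exactly 2,
   through some w; then x and w are two covered vertices of the ball around z. *)
Lemma ball2_meets_covered (D : {set T}) x z :
  x \in covered D -> z \notin covered D -> e x z -> 1 < #|ball2 z :&: covered D|.
Proof.
move=> xC zN exz; case/bigcupP: (xC) => d dD.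
rewrite inE => /within2P[w]; rewrite !inE => /andP[dw /orP[/eqP xw | ewx]].
  subst w; case/negP: zN; apply/bigcupP; exists d; rewrite // inE.
  by apply/within2P; exists x; rewrite !inE dw exz orbT.
have wC : w \in covered D.
  apply/bigcupP; exists d; rewrite // inE.
  by apply/within2P; exists w; rewrite !inE dw eqxx.
apply/card_gt1P; exists x, w; rewrite !inE xC wC !andbT; split.
- by apply/within2P; exists x; rewrite !inE exz eqxx !orbT.
- by apply/within2P; exists x; rewrite !inE (e_sym x w) ewx exz !orbT.
- by apply: contraTneq ewx => ->; rewrite e_irr.
Qed.

Lemma exists_uncovered_small_gain (D : {set T}) :
  connected e -> D != set0 -> covered D != setT ->
  exists2 z, z \notin covered D & #|ball2 z :\: covered D| <= r ^ 2 - 1.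
Proof.
move=> conn /set0Pn[d dD]; rewrite -properT => /properP[_ [y _ yN]].
have [x [z [xC zN exz]]] := connected_edge_out conn (mem_covered dD) yN.
exists z => //; have := ball2_meets_covered xC zN exz.
have := cardsID (covered D) (ball2 z); have := card_ball2 z; lia.
Qed.

(* The constant 2 accounts for the first ball: r^2 + 1 = 2 + (r^2 - 1). *)
Lemma packing_greedy (D : {set T}) : connected e -> packing D -> D != set0 ->
  #|covered D| <= 2 + #|D| * (r ^ 2 - 1) ->
  exists D', [/\ packing D', D \subset D', covered D' = setT &
                 #|T| <= 2 + #|D'| * (r ^ 2 - 1)].
Proof.
move=> conn; have [k] := ubnP #|~: covered D|.
elim: k D => // k IH D ltk packD D0 leD.
have [covT | covN] := eqVneq (covered D) setT.
  by exists D; rewrite -cardsT -covT.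
have [v vN lev] := exists_uncovered_small_gain conn D0 covN.
have vD : v \notin D by apply: contra vN; apply: mem_covered.
have [|||D' [packD' subD' covT leT]] := IH (v |: D) _ (packing_setU1 packD vN).
- rewrite -ltnS; apply: leq_trans ltk; rewrite ltnS; apply: proper_card.
  rewrite properC covered_setU1 properUr //.
  by apply/subsetPn; exists v; rewrite // inE within2xx.
- by apply/set0Pn; exists v; rewrite setU11.
- have := cardsU (ball2 v) (covered D); have := cardsD (ball2 v) (covered D).
  have := subset_leq_card (subsetIl (ball2 v) (covered D)).
  rewrite covered_setU1 cardsU1 vD; nia.
by exists D'; split=> //; apply: subset_trans subD'; apply: subsetUr.
Qed.

Lemma exists_dense_packing_far_pair u v :
  0 < r -> connected e -> ~~ within2 e u v ->
  exists D, packing D /\ #|T| <= #|D| * r ^ 2.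
Proof.
move=> r0 conn uv.
have [||D [packD uD covT leT]] := packing_greedy conn (@packing_set1 u).
- by apply/set0Pn; exists u; rewrite inE.
- by rewrite covered_set1 cards1; have := card_ball2 u; lia.
have D2 : 1 < #|D|.
  rewrite -(cards1 u); apply: proper_card; rewrite properEneq uD andbT.
  apply: contraNneq uv => uD'.
  by move/setP/(_ v): covT; rewrite -uD' covered_set1 !inE => ->.
by exists D; split=> //; move: leT; nia.
Qed.

Lemma card_diam2_not_moore :
  2 <= r -> (forall u v, within2 e u v) -> ~ moore2 e r -> #|T| <= r ^ 2.
Proof.
move=> r2 diam notMoore; have [-> // | /card_gt0P[u _]] := posnP #|T|.
have : #|T| <= r ^ 2 + 1.
  rewrite -cardsT -(_ : ball2 u = setT) ?card_ball2 //.
  by apply/setP=> x; rewrite !inE diam.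
rewrite leq_eqVlt => /orP[/eqP nT | ]; last by rewrite addn1 ltnS.
case: notMoore; split=> //; split=> //; split=> //.
have /properP[_ [v _ vN]] : cnbhd e u \proper setT.
  by rewrite properEcard subsetT cardsT nT card_cnbhd; nia.
by exists u, v; move: vN; rewrite !inE negb_or eq_sym.
Qed.

Lemma exists_dense_packing : 2 <= r -> connected e -> ~ moore2 e r ->
  exists D, packing D /\ #|T| <= #|D| * r ^ 2.
Proof.
move=> r2 conn notMoore.
have [/existsP[u /existsP[v uv]] | /existsPn near] :=
  boolP [exists u, exists v, ~~ within2 e u v].
  exact: exists_dense_packing_far_pair (ltnW r2) conn uv.
have diam u v : within2 e u v by move/existsPn: (near u) => /(_ v); rewrite negbK.
have [T0 | /card_gt0P[u _]] := posnP #|T|.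
  by exists set0; split; [move=> ?; rewrite inE | rewrite T0].
exists [set u]; split; first exact: packing_set1.
by rewrite cards1 mul1n; exact: card_diam2_not_moore.
Qed.

End RegularGraph.

Theorem theorem5 (T : finType) (e : rel T) (r : nat) :
  2 <= r -> simple_graph e -> connected e -> regular e r ->
  (~ moore2 e r -> gamma_k e r * r ^ 2 <= (r ^ 2 - 1) * #|T|) /\
  (moore2 e r -> gamma_k e r * (r ^ 2 + 1) = r ^ 2 * #|T| /\ gamma_k e r = r ^ 2).
Proof.
move=> r2 [e_sym e_irr] conn e_reg.
split=> [notMoore | [_ [[diam _] nT]]].
  have [D [packD leT]] := exists_dense_packing e_sym e_irr e_reg r2 conn notMoore.
  exact: gamma_k_packing packD leT.
have gamma_r2 : gamma_k e r = r ^ 2 by rewrite (gamma_k_diam2 e_sym e_irr e_reg) // nT addn1.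
by rewrite gamma_r2 nT.
Qed.
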